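(* As $t\to+\infty$, $$f(t,1/e)\sim\left(\frac{\pi t}{2}\right)^{1/2}e^{t},$$ where $f(t,a)=t\int_0^1(ax)^{-tx}\,dx$.
   Context: For real $a>0$ and real $t$, $f(t,a)=t\int_0^1 (ax)^{-tx}\,dx$, where $(ax)^{-tx}=\exp(-tx\ln(ax))$ for $x\in(0,1]$. The notation $g\sim h$ means $g/h\to1$. *)

From Stdlib Require Import Reals.
From Coquelicot Require Import Coquelicot.
Open Scope R_scope.

(* (a x)^(-t x) = exp (-t x ln (a x)) for x in (0,1].  At the single point
   x = 0 Stdlib's ln 0 = 0, so the integrand takes the value 1 there (its
   continuous extension); a single point does not affect the integral. *)
Definition integrand (t a x : R) : R := exp (- (t * x * ln (a * x))).

Definition f_ta (t a : R) : R := t * RInt (fun x => integrand t a x) 0 1.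

(* With a = 1/e the integrand is exp (t phi x), phi x = x (1 - ln x), which is
   maximal at the endpoint x = 1 with phi 1 = 1 and phi''(1) = -1: Laplace's
   method.  With t = 2 s^2 the bounds
     1 - (1-x)^2/2 - (1-x)^3/3 <= phi x <= 1 - (1-x)^2/2     (the left one on [1/2, 1])
   give
     e^t (G (s/2) / s - 1 / (3 s^2)) <= int_0^1 exp (t phi x) dx <= e^t G s / s,
   where G y = int_0^y exp (-u^2) du tends to sqrt(pi)/2.  That value is taken
   from mathcomp-analysis, whose pi and Lebesgue integral are identified with
   Stdlib's PI and Coquelicot's RInt. *)

From Stdlib Require Import Reals Lra.
From Coquelicot Require Import Coquelicot.
From mathcomp Require all_boot all_order all_algebra all_classical all_reals all_analysis.
From mathcomp Require Rstruct Rstruct_topology.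
Open Scope R_scope.

Lemma ln_le_sub1 x : 0 < x -> ln x <= x - 1.
Proof. intros hx. pose proof (exp_ineq1_le (ln x)) as h. rewrite exp_ln in h; lra. Qed.

Lemma exp_le_exp x y : x <= y -> exp x <= exp y.
Proof.
intros h. destruct (Req_dec x y) as [->|hne]; [lra|]. left; apply exp_increasing; lra.
Qed.

Lemma nonpos_derive_le (p dp : R -> R) a b : a <= b ->
  (forall c, a <= c <= b -> derivable_pt_lim p c (dp c)) ->
  (forall c, a < c < b -> dp c <= 0) -> p b <= p a.
Proof.
intros hab hp hdp. destruct (Req_dec a b) as [<-|hne]; [lra|].
destruct (MVT_cor2 p dp a b) as [c [hpc hc]]; [lra|exact hp|].
specialize (hdp c hc). nra.
Qed.

Lemma ln_ge_sub1_sub_sqr x : 1/2 <= x <= 1 -> x - 1 - (1 - x) * (1 - x) <= ln x.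
Proof.
intros hx.
set (p := fun y => ln y - (y - 1) + (1 - y) * (1 - y)).
assert (hp : p 1 <= p x).
{ apply (nonpos_derive_le p (fun y => (1 - y) * (1 - 2 * y) / y)); [lra| |].
  - intros c hc. apply is_derive_Reals. unfold p. auto_derive; [lra|]. field. lra.
  - intros c hc. apply Rmult_le_reg_r with c; [lra|].
    unfold Rdiv. rewrite Rmult_assoc, Rinv_l by lra. nra. }
unfold p in hp. rewrite ln_1 in hp. lra.
Qed.

Definition phi x := x * (1 - ln x).

Lemma phi_1 : phi 1 = 1.
Proof. unfold phi. rewrite ln_1. ring. Qed.

Lemma phi_le x : 0 < x <= 1 -> phi x <= 1 - (1 - x) * (1 - x) / 2.
Proof.
intros hx.
set (p := fun y => 1 - (1 - y) * (1 - y) / 2 - phi y).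
assert (hp : p 1 <= p x).
{ apply (nonpos_derive_le p (fun y => 1 - y + ln y)); [lra| |].
  - intros c hc. apply is_derive_Reals. unfold p, phi. auto_derive; [lra|]. field. lra.
  - intros c hc. pose proof (ln_le_sub1 c). lra. }
unfold p in hp. rewrite phi_1 in hp. lra.
Qed.

Lemma phi_ge x : 1/2 <= x <= 1 ->
  1 - (1 - x) * (1 - x) / 2 - (1 - x) ^ 3 / 3 <= phi x.
Proof.
intros hx.
set (p := fun y => phi y - 1 + (1 - y) * (1 - y) / 2 + (1 - y) ^ 3 / 3).
assert (hp : p 1 <= p x).
{ apply (nonpos_derive_le p (fun y => - (ln y - (y - 1) + (1 - y) * (1 - y)))); [lra| |].
  - intros c hc. apply is_derive_Reals. unfold p, phi. auto_derive; [lra|]. field. lra.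
  - intros c hc. pose proof (ln_ge_sub1_sub_sqr c). lra. }
unfold p in hp. rewrite phi_1 in hp. lra.
Qed.

Lemma integrand_inv_e t x : 0 < x -> integrand t (/ exp 1) x = exp (t * phi x).
Proof.
intros hx. unfold integrand, phi.
rewrite ln_mult, ln_Rinv, ln_exp by (try apply Rinv_0_lt_compat; try apply exp_pos; lra).
f_equal. ring.
Qed.

(* From [- ln x = - 2 ln (sqrt x) <= 2 / sqrt x]. *)
Lemma abs_mul_ln_le x : 0 < x <= 1 -> Rabs (x * ln x) <= 2 * sqrt x.
Proof.
intros hx.
assert (hs : 0 < sqrt x) by (apply sqrt_lt_R0; lra).
assert (hss : sqrt x * sqrt x = x) by (apply sqrt_sqrt; lra).
assert (hln : ln x = 2 * ln (sqrt x)) by (rewrite <- hss at 1; rewrite ln_mult by lra; ring).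
assert (hln0 : ln x <= 0) by (pose proof (ln_le_sub1 x); lra).
assert (hlns : - ln (sqrt x) <= / sqrt x - 1).
{ rewrite <- ln_Rinv by lra. apply ln_le_sub1. apply Rinv_0_lt_compat; lra. }
assert (hxs : x * / sqrt x = sqrt x) by (rewrite <- hss at 1; field; lra).
rewrite Rabs_left1 by nra. rewrite hln. nra.
Qed.

(* Stdlib's junk value of [ln] off its domain. *)
Lemma ln_of_nonpos x : x <= 0 -> ln x = 0.
Proof. intros hx. unfold ln. destruct (Rlt_dec 0 x) as [h|h]; [exfalso; lra|reflexivity]. Qed.

Lemma continuous_mul_ln_0 : continuous (fun x => x * ln x) 0.
Proof.
apply continuity_pt_filterlim. intros eps heps.
set (d := Rmin 1 ((eps / 2) * (eps / 2))).
assert (hd : 0 < d) by (apply Rmin_pos; nra).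
assert (hd1 : d <= 1) by apply Rmin_l.
assert (hd2 : d <= eps / 2 * (eps / 2)) by apply Rmin_r.
exists d. split; [exact hd|]. intros x [_ hx]. simpl in *. unfold Rdist in *.
rewrite Rmult_0_l, Rminus_0_r. rewrite Rminus_0_r in hx.
destruct (Rle_or_lt x 0) as [hx0|hx0].
- rewrite ln_of_nonpos, Rmult_0_r, Rabs_R0 by lra. exact heps.
- rewrite Rabs_pos_eq in hx by lra.
  assert (hsx : sqrt x < eps / 2).
  { rewrite <- (sqrt_square (eps / 2)) by lra. apply sqrt_lt_1_alt. lra. }
  pose proof (abs_mul_ln_le x ltac:(lra)). lra.
Qed.

Lemma continuous_integrand t a z : 0 < a -> 0 <= z -> continuous (integrand t a) z.
Proof.
intros ha hz. destruct (Req_dec z 0) as [->|hz0].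
- apply continuous_ext with (f := fun x => exp (- (t / a * (a * x * ln (a * x))))).
  { intros x. unfold integrand. f_equal. field. lra. }
  apply continuous_comp with (f := fun x => a * x * ln (a * x)) (g := fun y => exp (- (t / a * y))).
  + apply continuous_comp with (f := fun x => a * x) (g := fun y => y * ln y).
    * apply (@ex_derive_continuous R_AbsRing R_NormedModule). auto_derive. trivial.
    * rewrite Rmult_0_r. exact continuous_mul_ln_0.
  + apply (@ex_derive_continuous R_AbsRing R_NormedModule). auto_derive. trivial.
- apply (@ex_derive_continuous R_AbsRing R_NormedModule). unfold integrand. auto_derive. nra.
Qed.

Lemma ex_RInt_integrand t a b c : 0 < a -> 0 <= b -> 0 <= c -> ex_RInt (integrand t a) b c.
Proof.
intros ha hb hc. apply (@ex_RInt_continuous R_CompleteNormedModule). intros z hz.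
apply continuous_integrand; [exact ha|]. pose proof (Rmin_glb b c 0 hb hc). lra.
Qed.

Definition gauss u := exp (- (u * u)).
Definition gauss_int x := RInt gauss 0 x.

Ltac continuous_by_derive :=
  apply (@ex_derive_continuous R_AbsRing R_NormedModule); unfold gauss; auto_derive; auto.

Lemma ex_RInt_gauss a b : ex_RInt gauss a b.
Proof. apply (@ex_RInt_continuous R_CompleteNormedModule). intros z _. continuous_by_derive. Qed.

Lemma is_derive_gauss_int x : is_derive gauss_int x (gauss x).
Proof.
apply (is_derive_RInt gauss gauss_int 0 x).
- apply filter_forall. intros b. apply (@RInt_correct R_CompleteNormedModule), ex_RInt_gauss.
- continuous_by_derive.
Qed.

Lemma gauss_int_0 : gauss_int 0 = 0.
Proof. apply (@RInt_point R_CompleteNormedModule). Qed.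

Lemma RInt_gauss_lin s a : s <> 0 ->
  RInt (fun x => gauss (s * (1 - x))) a 1 = gauss_int (s * (1 - a)) / s.
Proof.
intros hs.
assert (h := RInt_comp_lin gauss (- s) s a 1 (ex_RInt_gauss _ _)).
rewrite RInt_scal in h.
2: { apply (@ex_RInt_continuous R_CompleteNormedModule). intros z _. continuous_by_derive. }
replace (- s * 1 + s) with 0 in h by ring.
replace (- s * a + s) with (s * (1 - a)) in h by ring.
rewrite <- (opp_RInt_swap gauss) in h by apply ex_RInt_gauss.
rewrite (RInt_ext _ (fun y => gauss (- s * y + s))) by (intros x _; f_equal; ring).
change (- s * RInt (fun y => gauss (- s * y + s)) a 1 = - gauss_int (s * (1 - a))) in h.
apply Rmult_eq_reg_l with (- s); [rewrite h; field; exact hs | lra].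
Qed.

Module GaussianIntegral.
Import all_boot all_order all_algebra all_classical all_reals all_analysis Rstruct Rstruct_topology.
Import Order.TTheory GRing.Theory Num.Theory.
Import numFieldNormedType.Exports.
Local Open Scope classical_set_scope.
Local Open Scope ring_scope.

Lemma RcosE (x : R) : Rtrigo_def.cos x = cos x.
Proof.
rewrite /Rtrigo_def.cos; case: exist_cos => y.
rewrite /cos_in /infinite_sum => cos_ub.
have := @cvg_cos_coeff' R x => /cvg_lim <- //.
apply/esym; apply: (@cvg_lim R^o) => //.
rewrite -cvg_shiftS /=; apply/cvgrPdist_lt => /= e /RltP /cos_ub[N Nub].
near=> n.
have nN : (n >= N)%coq_nat by apply/ssrnat.leP; near: n; exact: nbhs_infty_ge.
move: Nub => /(_ _ nN) /[!RdistE] /RltP /=.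
rewrite distrC sum_f_R0E; congr (`| _ - _ | < e).
apply: eq_bigr=> k _; rewrite /cos_n /cos_coeff' !RpowE factE INRE RmultE Rsqr_def RmultE.
have -> : (2 * k)%coq_nat = k.*2 by rewrite -mul2n.
by rewrite -expr2 -exprM mul2n RdivE mulrAC.
Unshelve. all: by end_near. Qed.

(* Both [pi / 2] and [PI / 2] are the unique zero of [cos] in [[0, 2]]. *)
Lemma pi_PI : pi = PI.
Proof.
have h1 : (0 <= (pi : R) / 2 <= 2)%R.
  have a := @pihalf_ge1 R; have b := @pihalf_lt2 R.
  by apply/andP; split; [exact: le_trans ler01 a | exact: ltW b].
have h2 : (0 <= PI / 2 <= 2)%R.
  have a := PI2_1; have b := PI_4.
  have -> : (PI / 2)%R = (PI / 2)%coqR by [].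
  have two : (2%R : R) = 2%coqR by rewrite IZRposE INRE.
  have h2' : (0 <= PI / 2 <= 2)%coqR by Lra.lra.
  by apply/andP; split; apply/RleP; [exact (proj1 h2') | rewrite two; exact (proj2 h2')].
have := cos_02_uniq h1 (@cos_pihalf R) h2.
have -> : cos (PI / 2) = 0 by rewrite -RcosE; exact: cos_PI2.
move=> /(_ erefl) e.
have : (pi / 2 * 2 = PI / 2 * 2)%R by rewrite e.
by rewrite -!mulrA mulVf ?mulr1.
Qed.

Lemma derivable_pt_lim_derive1 {F : R -> R} {x l} : derivable_pt_lim F x l ->
  derivable (F : R^o -> R^o) x 1 /\ derive1 (F : R^o -> R^o) x = l.
Proof.
move=> Fl.
have C : (fun h : R => h^-1 * (F (h + x) - F x)) @ (0:R)^' --> l.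
  apply/(@cvgrPdist_lt _ R^o) => e /RltP e0.
  have [d dh] := Fl e e0.
  apply/nbhs_ballP; exists (pos d) => /=; first by apply/RltP; exact: cond_pos d.
  move=> h hb hne.
  have hne' : h <> 0 by move=> h0; move: hne; rewrite h0 eqxx.
  have hd : (Rabs h < d)%coqR.
    by move: hb; rewrite /ball /= sub0r normrN -RabsE => /RltP.
  by move/RltP: (dh h hne' hd); rewrite RabsE distrC (addrC h x) mulrC.
have E : (fun h : R => h^-1 *: (((F : R^o -> R^o) \o shift x) (h *: (1:R^o)) - F x)) =
         (fun h : R => h^-1 * (F (h + x) - F x)).
  by apply/funext => h /=; rewrite /shift /= [h *: 1]mulr1.
move: C; rewrite -E => C.
split; first exact: cvgP C.
by rewrite derive1E; apply: (@cvg_lim R^o) C.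
Qed.

Lemma gauss_int_integral0_gauss b : (0 < b)%coqR ->
  gauss_int b = gauss_integral_proof.integral0_gauss b.
Proof.
move=> b0.
have D x : derivable (gauss_int : R^o -> R^o) x 1 /\
             derive1 (gauss_int : R^o -> R^o) x = gauss_fun x.
  have [h1 h2] := derivable_pt_lim_derive1 ((is_derive_Reals _ _ _).1 (is_derive_gauss_int x)).
  by split => //; rewrite h2 /gauss RexpE /gauss_fun expr2.
have := @continuous_FTC2 R gauss_fun gauss_int 0 b _ _ _ _.
rewrite /gauss_integral_proof.integral0_gauss /Rintegral => ->.
- by rewrite gauss_int_0 -EFinB /= subr0.
- by move/RltP: b0.
- by apply: continuous_subspaceT => x; exact: continuous_gauss_fun.
- split.
  + by move=> x _; exact: (D x).1.
  + apply: cvg_at_right_filter; apply/continuity_pt_cvg; apply: derivable_continuous_pt.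
    by exists (gauss 0); apply/is_derive_Reals/is_derive_gauss_int.
  + apply: cvg_at_left_filter; apply/continuity_pt_cvg; apply: derivable_continuous_pt.
    by exists (gauss b); apply/is_derive_Reals/is_derive_gauss_int.
- by move=> x _; exact: (D x).2.
Qed.

Lemma cvg_integral0_gauss :
  gauss_integral_proof.integral0_gauss x @[x --> +oo] --> Num.sqrt (pi : R) / 2.
Proof.
have : Num.sqrt (gauss_integral_proof.integral0_gauss x ^+ 2) @[x --> +oo]
         --> Num.sqrt ((pi : R) / 4).
  apply: continuous_cvg; first exact: sqrt_continuous.
  exact: gauss_integral_proof.cvg_integral0_gauss_sqr.
rewrite sqrtrM ?pi_ge0// sqrtrV// (_ : 4 = 2 ^+ 2); last by rewrite expr2 -natrM.
rewrite sqrtr_sqr ger0_norm//.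
under eq_fun do rewrite sqrtr_sqr ger0_norm ?gauss_integral_proof.integral0_gauss_ge0//.
by [].
Qed.

Lemma is_lim_p_infty_of_cvg (f : R -> R) (l : R) :
  f x @[x --> +oo] --> l -> is_lim f p_infty l.
Proof.
move=> fl; apply/is_lim_spec => eps.
have eps0 : (0 < pos eps)%R by apply/RltP; exact: cond_pos.
move/(@cvgrPdist_lt _ R^o): fl => /(_ _ eps0) [M [_ HM]].
by exists M => x /RltP Mx; move/RltP: (HM x Mx); rewrite distrC -RabsE.
Qed.

Lemma is_lim_integral0_gauss :
  is_lim gauss_integral_proof.integral0_gauss p_infty (sqrt PI / 2)%coqR.
Proof.
have -> : (sqrt PI / 2)%coqR = Num.sqrt (pi : R) / 2.
  by rewrite RdivE RsqrtE pi_PI IZRposE INRE.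
exact: is_lim_p_infty_of_cvg cvg_integral0_gauss.
Qed.

Lemma is_lim_gauss_int : is_lim gauss_int p_infty (sqrt PI / 2)%coqR.
Proof.
apply: (is_lim_ext_loc _ _ _ _ _ is_lim_integral0_gauss).
by exists 0 => x x0; rewrite gauss_int_integral0_gauss.
Qed.
End GaussianIntegral.

(* [P] is an antiderivative; the bound is [int_0^oo u^3 exp (- s^2 u^2) du]. *)
Lemma RInt_cube_gauss_lin_le s : 0 < s ->
  RInt (fun x => (1 - x) ^ 3 * gauss (s * (1 - x))) (1/2) 1 <= / (2 * s ^ 4).
Proof.
intros hs.
set (P := fun x => ((1 - x) * (1 - x) / (2 * s * s) + / (2 * s ^ 4)) * gauss (s * (1 - x))).
assert (hP : is_RInt (fun x => (1 - x) ^ 3 * gauss (s * (1 - x))) (1/2) 1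
                     (minus (P 1) (P (1/2)))).
{ apply (@is_RInt_derive R_CompleteNormedModule).
  - intros x _. unfold P, gauss. auto_derive; [trivial|]. unfold Rminus. field. lra.
  - intros x _. continuous_by_derive. }
rewrite (is_RInt_unique _ _ _ _ hP).
change (minus (P 1) (P (1/2))) with (P 1 - P (1/2)).
assert (hP1 : P 1 = / (2 * s ^ 4)).
{ unfold P, gauss. replace (- (s * (1 - 1) * (s * (1 - 1)))) with 0 by ring.
  rewrite exp_0. field. lra. }
assert (hP2 : 0 <= P (1/2)).
{ unfold P, gauss. apply Rmult_le_pos; [|left; apply exp_pos].
  assert (0 < / (2 * s * s)) by (apply Rinv_0_lt_compat; nra).
  assert (0 < / (2 * s ^ 4)) by (apply Rinv_0_lt_compat, Rmult_lt_0_compat, pow_lt; lra).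
  unfold Rdiv. nra. }
lra.
Qed.

Lemma integrand_inv_e_le s x : 0 < x <= 1 ->
  integrand (2 * s * s) (/ exp 1) x <= exp (2 * s * s) * gauss (s * (1 - x)).
Proof.
intros hx. rewrite integrand_inv_e by lra. unfold gauss. rewrite <- exp_plus.
apply exp_le_exp. pose proof (phi_le x hx). nra.
Qed.

Lemma integrand_inv_e_ge s x : 1/2 <= x <= 1 ->
  exp (2 * s * s) * gauss (s * (1 - x))
  - exp (2 * s * s) * (2 * s * s / 3) * ((1 - x) ^ 3 * gauss (s * (1 - x)))
  <= integrand (2 * s * s) (/ exp 1) x.
Proof.
intros hx. rewrite integrand_inv_e by lra. unfold gauss.
set (u := 1 - x).
assert (hphi : exp ((2 * s * s) + - (s * u * (s * u))) * exp (- (2 * s * s * u ^ 3 / 3))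
               <= exp (2 * s * s * phi x)).
{ rewrite <- exp_plus. apply exp_le_exp. pose proof (phi_ge x hx). unfold u. nra. }
pose proof (exp_ineq1_le (- (2 * s * s * u ^ 3 / 3))) as hlin.
rewrite exp_plus in hphi.
assert (hpos : 0 < exp (2 * s * s) * exp (- (s * u * (s * u))))
  by (apply Rmult_lt_0_compat; apply exp_pos).
nra.
Qed.

Lemma RInt_integrand_inv_e_le s : 0 < s ->
  RInt (integrand (2 * s * s) (/ exp 1)) 0 1 <= exp (2 * s * s) * (gauss_int s / s).
Proof.
intros hs.
apply Rle_trans with (RInt (fun x => exp (2 * s * s) * gauss (s * (1 - x))) 0 1).
- apply RInt_le; [lra | | |].
  + apply ex_RInt_integrand; [apply Rinv_0_lt_compat, exp_pos | lra | lra].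
  + apply (@ex_RInt_continuous R_CompleteNormedModule). intros z _. continuous_by_derive.
  + intros x hx. apply integrand_inv_e_le. lra.
- rewrite (RInt_scal (V := R_CompleteNormedModule)), RInt_gauss_lin by (try lra;
    apply (@ex_RInt_continuous R_CompleteNormedModule); intros z _; continuous_by_derive).
  rewrite Rminus_0_r, Rmult_1_r. apply Rle_refl.
Qed.

Lemma RInt_integrand_inv_e_ge s : 0 < s ->
  exp (2 * s * s) * (gauss_int (s / 2) / s - / (3 * (s * s)))
  <= RInt (integrand (2 * s * s) (/ exp 1)) 0 1.
Proof.
intros hs.
set (h := integrand (2 * s * s) (/ exp 1)).
assert (hh : forall b c, 0 <= b -> 0 <= c -> ex_RInt h b c).
{ intros b c hb hc.
  apply ex_RInt_integrand; [apply Rinv_0_lt_compat, exp_pos | exact hb | exact hc]. }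
rewrite <- (RInt_Chasles h 0 (1/2) 1) by (apply hh; lra).
assert (hleft : 0 <= RInt h 0 (1/2)).
{ apply RInt_ge_0; [lra | apply hh; lra |]. intros x _. left. apply exp_pos. }
set (E := exp (2 * s * s)).
set (g1 := fun x => E * gauss (s * (1 - x))).
set (g3 := fun x => E * (2 * s * s / 3) * ((1 - x) ^ 3 * gauss (s * (1 - x)))).
assert (hg1 : ex_RInt g1 (1/2) 1).
{ apply (@ex_RInt_continuous R_CompleteNormedModule). intros z _.
  unfold g1. continuous_by_derive. }
assert (hg3 : ex_RInt g3 (1/2) 1).
{ apply (@ex_RInt_continuous R_CompleteNormedModule). intros z _.
  unfold g3. continuous_by_derive. }
assert (hright : RInt (fun x => g1 x - g3 x) (1/2) 1 <= RInt h (1/2) 1).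
{ apply RInt_le; [lra | | apply hh; lra |].
  - apply (ex_RInt_minus (V := R_CompleteNormedModule)); assumption.
  - intros x hx. apply integrand_inv_e_ge. lra. }
replace (RInt (fun x => g1 x - g3 x) (1/2) 1) with (RInt g1 (1/2) 1 - RInt g3 (1/2) 1) in hright
  by (symmetry; exact (RInt_minus g1 g3 _ _ hg1 hg3)).
assert (hI1 : RInt g1 (1/2) 1 = E * (gauss_int (s / 2) / s)).
{ unfold g1. rewrite (RInt_scal (V := R_CompleteNormedModule)), RInt_gauss_lin by
    (try lra; apply (@ex_RInt_continuous R_CompleteNormedModule); intros z _; continuous_by_derive).
  replace (s * (1 - 1/2)) with (s / 2) by field. reflexivity. }
assert (hI3 : RInt g3 (1/2) 1 <= E * / (3 * (s * s))).
{ unfold g3. rewrite (RInt_scal (V := R_CompleteNormedModule)) by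
    (apply (@ex_RInt_continuous R_CompleteNormedModule); intros z _; continuous_by_derive).
  apply Rle_trans with (E * (2 * s * s / 3) * / (2 * s ^ 4)).
  - apply Rmult_le_compat_l; [unfold E; pose proof (exp_pos (2 * s * s)); nra |].
    apply RInt_cube_gauss_lin_le, hs.
  - right. field. lra. }
change (plus (RInt h 0 (1/2)) (RInt h (1/2) 1)) with (RInt h 0 (1/2) + RInt h (1/2) 1).
lra.
Qed.

Definition ratio_lower s := 2 / sqrt PI * (gauss_int (s / 2) - / (3 * s)).
Definition ratio_upper s := 2 / sqrt PI * gauss_int s.

Lemma f_ta_inv_e_ratio_bounds s : 0 < s ->
  ratio_lower s
  <= f_ta (2 * s * s) (/ exp 1) / (sqrt (PI * (2 * s * s) / 2) * exp (2 * s * s))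
  <= ratio_upper s.
Proof.
intros hs. unfold ratio_lower, ratio_upper.
assert (hpi : 0 < sqrt PI) by apply sqrt_lt_R0, PI_RGT_0.
assert (hsqrt : sqrt (PI * (2 * s * s) / 2) = sqrt PI * s).
{ replace (PI * (2 * s * s) / 2) with (PI * (s * s)) by field.
  rewrite sqrt_mult_alt by (left; apply PI_RGT_0). rewrite sqrt_square; lra. }
pose proof (RInt_integrand_inv_e_le s hs) as hle.
pose proof (RInt_integrand_inv_e_ge s hs) as hge.
unfold f_ta. rewrite hsqrt.
set (I := RInt (integrand (2 * s * s) (/ exp 1)) 0 1) in *.
set (E := exp (2 * s * s)) in *.
assert (hE : 0 < E) by apply exp_pos.
assert (hc : 0 < 2 * s / (sqrt PI * E)) by (apply Rdiv_lt_0_compat; nra).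
replace (2 * s * s * I / (sqrt PI * s * E)) with (2 * s / (sqrt PI * E) * I) by (field; lra).
split.
- apply Rle_trans with (2 * s / (sqrt PI * E) * (E * (gauss_int (s / 2) / s - / (3 * (s * s))))).
  + right. field. lra.
  + apply Rmult_le_compat_l; lra.
- apply Rle_trans with (2 * s / (sqrt PI * E) * (E * (gauss_int s / s))).
  + apply Rmult_le_compat_l; lra.
  + right. field. lra.
Qed.

Lemma is_lim_scal_l_p_infty c : 0 < c -> is_lim (fun x => c * x) p_infty p_infty.
Proof.
intros hc. apply is_lim_spec. intros M. exists (M / c). intros x hx.
replace M with (c * (M / c)) by (field; lra). apply Rmult_lt_compat_l; lra.
Qed.

Lemma is_lim_ratio_upper : is_lim ratio_upper p_infty 1.
Proof.
assert (hpi : 0 < sqrt PI) by apply sqrt_lt_R0, PI_RGT_0.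
replace (Finite 1) with (Rbar_mult (2 / sqrt PI) (sqrt PI / 2)) by (simpl; f_equal; field; lra).
apply is_lim_scal_l, GaussianIntegral.is_lim_gauss_int.
Qed.

Lemma is_lim_ratio_lower : is_lim ratio_lower p_infty 1.
Proof.
assert (hpi : 0 < sqrt PI) by apply sqrt_lt_R0, PI_RGT_0.
replace (Finite 1) with (Rbar_mult (2 / sqrt PI) (sqrt PI / 2 - 0))
  by (simpl; f_equal; field; lra).
apply is_lim_scal_l, is_lim_minus'.
- apply (is_lim_ext (fun s => gauss_int (/ 2 * s))); [intros s; f_equal; field |].
  apply is_lim_comp with p_infty.
  + exact GaussianIntegral.is_lim_gauss_int.
  + apply is_lim_scal_l_p_infty. lra.
  + exists 0. intros s _. discriminate.
- apply (is_lim_inv (fun s => 3 * s) p_infty p_infty); [| discriminate].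
  apply is_lim_scal_l_p_infty. lra.
Qed.

Lemma is_lim_comp_sqrt_half (h : R -> R) (l : Rbar) :
  is_lim h p_infty l -> is_lim (fun t => h (sqrt (t / 2))) p_infty l.
Proof.
intros hl. apply is_lim_comp with p_infty; [exact hl | |].
- apply is_lim_sqrt_p, (is_lim_ext (fun t => / 2 * t)); [intros t; field |].
  apply is_lim_scal_l_p_infty. lra.
- exists 0. intros t _. discriminate.
Qed.

Theorem mainTheorem4 :
  is_lim (fun t => f_ta t (/ exp 1) / (sqrt (PI * t / 2) * exp t)) p_infty 1.
Proof.
apply is_lim_le_le_loc with (f := fun t => ratio_lower (sqrt (t / 2)))
                            (g := fun t => ratio_upper (sqrt (t / 2))).
- exists 0. intros t ht.
  set (s := sqrt (t / 2)).
  assert (hs : 0 < s) by (apply sqrt_lt_R0; lra).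
  assert (ht2 : t = 2 * s * s) by (unfold s; rewrite Rmult_assoc, sqrt_sqrt; lra).
  rewrite ht2. apply f_ta_inv_e_ratio_bounds, hs.
- apply is_lim_comp_sqrt_half, is_lim_ratio_lower.
- apply is_lim_comp_sqrt_half, is_lim_ratio_upper.
Qed.
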